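(* For every integer $n\geq 3$, the $n$-fan $F_n=P_{n+1}\lor K_1$ satisfies $\eta(F_n)=2$.
   Context: All graphs are finite, simple and undirected. $P_{n+1}$ is the path with $n+1$ vertices (length $n$), $K_1$ is the graph with one vertex, and $G_1\lor G_2$ (join) is the graph on $V(G_1)\cup V(G_2)$ with edges $E(G_1)\cup E(G_2)\cup\{(u,v):u\in V(G_1),v\in V(G_2)\}$. For a vertex $v$, $N(v)$ is its set of neighbours. For a positive integer $k$, $[k]=\{1,\dots,k\}$. For a labeling $f:V(G)\to[k]$ and $S\subseteq V(G)$, $f(S)=\sum_{u\in S}f(u)$. A labeling $f:V(G)\to[k]$ is an additive $k$-coloring if $f(N(u))\neq f(N(v))$ for every edge $(u,v)$ of $G$. The additive chromatic number $\eta(G)$ is the least $k$ for which $G$ has an additive $k$-coloring. *)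

From mathcomp Require Import all_boot.
Unset Printing Implicit Defensive.

Record sgraph := SGraph {
  vtx :> finType;
  adj : rel vtx;
  adj_sym : symmetric adj;
  adj_irr : irreflexive adj }.

Definition nbhd {G : sgraph} (v : G) : {set G} := [set u | adj G v u].

Definition fsum {G : sgraph} (f : G -> nat) (S : {set G}) : nat :=
  \sum_(u in S) f u.

Definition additive_coloring (G : sgraph) (k : nat) (f : G -> nat) : Prop :=
  (forall v, 1 <= f v <= k) /\
  (forall u v, adj G u v -> fsum f (nbhd u) <> fsum f (nbhd v)).

Definition additive_colorable (G : sgraph) (k : nat) : Prop :=
  exists f : G -> nat, additive_coloring G k f.

Definition additive_chromatic_number_is (G : sgraph) (k : nat) : Prop :=
  0 < k /\ additive_colorable G k /\
  (forall j, 0 < j < k -> ~ additive_colorable G j).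

(* The fan F_n = P_{n+1} \/ K_1 : vertices None (the apex, K_1) and
   Some i, i : 'I_(n+1) (the path P_{n+1}: i ~ i+1). *)
Definition fan_adj (n : nat) : rel (option 'I_n.+1) :=
  fun x y => match x, y with
  | None, None => false
  | None, Some _ | Some _, None => true
  | Some i, Some j => (i.+1 == j :> nat) || (j.+1 == i :> nat)
  end.

Lemma fan_adj_sym n : symmetric (fan_adj n).
Proof. by move=> [i|] [j|] //=; rewrite orbC. Qed.

Lemma fan_adj_irr n : irreflexive (fan_adj n).
Proof.
move=> [i|] //=; apply/negP => /orP [] /eqP H;
  by have := n_Sn i; rewrite H; move=> /(_ erefl).
Qed.

Definition fan (n : nat) : sgraph :=
  @SGraph _ (fan_adj n) (@fan_adj_sym n) (@fan_adj_irr n).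

From mathcomp Require Import all_boot zify.

(* With every label equal to 1 the neighbourhood sums are the degrees, and the
   adjacent path vertices 1 and 2 of F_n both have degree 3, so eta(F_n) > 1.
   For a 2-coloring label the apex 1 and the path vertex j by 1 if j is odd and
   j <> n, by 2 otherwise: an odd inner path vertex then sees the sum 5, an even
   one at most 4, the last pair (n-1, n) for odd n sees 4 and 3, and the apex,
   adjacent to the whole path of at least 4 vertices, sees at least 6. *)

Section BigOption.
Variables (R : Type) (idx : R) (op : Monoid.com_law idx).

Lemma big_option (T : finType) (F : option T -> R) :
  \big[op/idx]_(u : option T) F u =
  op (F None) (\big[op/idx]_(j : T) F (Some j)).
Proof.
rewrite (bigD1 None) //=; congr (op _ _).
rewrite (reindex_omap Some (fun u => u)) //=; last by case.
by apply: eq_bigl => j; rewrite eqxx.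
Qed.
End BigOption.

Definition fan_labeling {n} (c : nat) (g : nat -> nat) : fan n -> nat :=
  fun u => if u is Some j then g j else c.

Definition fan_path_nbhd_sum n (c : nat) (g : nat -> nat) (i : nat) : nat :=
  c + (if 0 < i then g i.-1 else 0) + (if i < n then g i.+1 else 0).

Lemma fsum_fan_apex n c g :
  fsum (fan_labeling c g) (nbhd (None : fan n)) = \sum_(j < n.+1) g j.
Proof.
rewrite /fsum big_mkcond big_option /= in_set /=.
by apply: eq_bigr => j _; rewrite in_set.
Qed.

Lemma fsum_fan_path n c g (i : 'I_n.+1) :
  fsum (fan_labeling c g) (nbhd (Some i : fan n)) = fan_path_nbhd_sum n c g i.
Proof.
rewrite /fsum /fan_path_nbhd_sum big_mkcond big_option /= in_set /= -!addnA.
congr (_ + _).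
have split_nbhd (j : 'I_n.+1) :
    (if (Some j : fan n) \in nbhd (Some i : fan n) then g j else 0) =
    (if j == i.-1 :> nat then (if 0 < i then g j else 0) else 0) +
    (if j == i.+1 :> nat then g j else 0).
  by rewrite in_set /=; case: i => [[|i] ?] /=; repeat case: ifP => /=; lia.
rewrite (eq_bigr _ (fun j _ => split_nbhd j)) {split_nbhd} big_split /=.
rewrite -!big_mkcond /= !big_ord1_eq ltnS; congr (_ + _).
by case: i => [[|i] ?] /=; [rewrite big1 | rewrite big_ord1_eq ltnW].
Qed.

Lemma fsum1_card (G : sgraph) (f : G -> nat) (S : {set G}) :
  (forall v, f v = 1) -> fsum f S = #|S|.
Proof. by move=> f1; rewrite -sum1_card; apply: eq_bigr. Qed.

Lemma additive_coloring1_card_nbhd (G : sgraph) (f : G -> nat) :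
  additive_coloring G 1 f -> forall u v, adj G u v -> #|nbhd u| <> #|nbhd v|.
Proof.
move=> [f1 f_add] u v uv; have f1' v' : f v' = 1 by have := f1 v'; lia.
by rewrite -!(@fsum1_card _ f _ f1'); exact: f_add.
Qed.

Lemma card_fan_path_nbhd n (i : 'I_n.+1) :
  #|nbhd (Some i : fan n)| = fan_path_nbhd_sum n 1 (fun _ => 1) i.
Proof. by rewrite -fsum_fan_path fsum1_card // => -[]. Qed.

Lemma not_additive_colorable_fan1 n : 3 <= n -> ~ additive_colorable (fan n) 1.
Proof.
move=> n_ge3 [f /additive_coloring1_card_nbhd fan_add].
have [lt1n lt2n] : 1 < n.+1 /\ 2 < n.+1 by lia.
apply: (fan_add (Some (inord 1)) (Some (inord 2))); first by rewrite /= !inordK.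
rewrite !card_fan_path_nbhd /fan_path_nbhd_sum !inordK //= !ifT //; lia.
Qed.

Definition fan_coloring n (j : nat) : nat := if odd j && (j != n) then 1 else 2.

Lemma fan_coloring_bounds n j : 1 <= fan_coloring n j <= 2.
Proof. by rewrite /fan_coloring; case: ifP. Qed.

Definition fan_coloring_sum n : nat -> nat :=
  fan_path_nbhd_sum n 1 (fan_coloring n).

Lemma fan_coloring_sum_le5 n i : fan_coloring_sum n i <= 5.
Proof.
have := fan_coloring_bounds n i.-1; have := fan_coloring_bounds n i.+1.
rewrite /fan_coloring_sum /fan_path_nbhd_sum; do 2 case: ifP => _; lia.
Qed.

Lemma fan_coloring_sum_odd n i : odd i -> i < n -> fan_coloring_sum n i = 5.
Proof.
move=> odd_i lt_in; rewrite /fan_coloring_sum /fan_path_nbhd_sum /fan_coloring.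
by repeat case: ifP; lia.
Qed.

Lemma fan_coloring_sum_even n i :
  ~~ odd i -> i <= n -> fan_coloring_sum n i <= 4.
Proof.
move=> even_i le_in; rewrite /fan_coloring_sum /fan_path_nbhd_sum /fan_coloring.
by repeat case: ifP; lia.
Qed.

Lemma fan_coloring_sum_last n : 3 <= n -> odd n ->
  fan_coloring_sum n n.-1 = 4 /\ fan_coloring_sum n n = 3.
Proof.
move=> n_ge3 odd_n; rewrite /fan_coloring_sum /fan_path_nbhd_sum /fan_coloring.
by repeat case: ifP; lia.
Qed.

Lemma fan_coloring_sum_neq n i :
  3 <= n -> i < n -> fan_coloring_sum n i <> fan_coloring_sum n i.+1.
Proof.
move=> n_ge3 lt_in; case: (boolP (odd i)) => [odd_i | even_i].
  rewrite fan_coloring_sum_odd //.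
  by have := fan_coloring_sum_even n i.+1; rewrite oddS odd_i; lia.
have [lt_i1n | ge_i1n] := ltnP i.+1 n.
  rewrite (fan_coloring_sum_odd n i.+1) //.
  by have := fan_coloring_sum_even n i; lia.
have [odd_n [-> ->]] : odd n /\ i = n.-1 /\ i.+1 = n by lia.
by have [-> ->] := fan_coloring_sum_last _ n_ge3 odd_n.
Qed.

Lemma sum_fan_coloring_ge6 n : 3 <= n -> 6 <= \sum_(j < n.+1) fan_coloring n j.
Proof.
move=> n_ge3; rewrite -(big_mkord xpredT); do 4 (rewrite big_ltn; last lia).
have := fan_coloring_bounds n 1; have := fan_coloring_bounds n 3.
have -> : fan_coloring n 0 = 2 by []; have -> : fan_coloring n 2 = 2 by [].
lia.
Qed.

Lemma additive_coloring_fan2 n :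
  3 <= n -> additive_coloring (fan n) 2 (fan_labeling 1 (fan_coloring n)).
Proof.
move=> n_ge3; split; first by case=> [j|] //=; exact: fan_coloring_bounds.
set f := fan_labeling 1 (fan_coloring n).
have path_lt_apex (i : 'I_n.+1) :
    fsum f (nbhd (Some i : fan n)) < fsum f (nbhd (None : fan n)).
  rewrite fsum_fan_path fsum_fan_apex.
  apply: leq_trans _ (sum_fan_coloring_ge6 _ n_ge3).
  exact: fan_coloring_sum_le5.
case=> [i|] [j|] //= adj_ij.
- rewrite !fsum_fan_path; have := ltn_ord i; have := ltn_ord j.
  case/orP: adj_ij => /eqP <- *; [|apply/nesym];
    by apply: fan_coloring_sum_neq => //; lia.
- by apply/eqP; rewrite neq_ltn path_lt_apex.
- by apply/eqP; rewrite neq_ltn path_lt_apex orbT.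
Qed.

Theorem mainTheorem6 (n : nat) : 3 <= n -> additive_chromatic_number_is (fan n) 2.
Proof.
move=> n_ge3; split=> //; split.
  by exists (fan_labeling 1 (fan_coloring n)); exact: additive_coloring_fan2.
by case=> [|[|[|j]]] //= _; exact: not_additive_colorable_fan1.
Qed.
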